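(* Let $(Q,\rightarrow)$ be a finite transition system, $\mathscr{R}$ a preorder on $Q$ and $\mathscr{P}\subseteq\mathscr{R}$ an equivalence relation with a representative $E.\mathrm{rep}\in E$ fixed for each block $E$ of $\mathscr{P}$, such that there is no $(\mathscr{P},\mathscr{R})$-splitter transition of type 1 and no $(\mathscr{P},\mathscr{R})$-splitter transition of type 2. Then $\mathscr{P}$ is $\mathscr{R}$-block-stable.
   Context: A preorder is a reflexive transitive relation; its blocks are $[q]_{\mathscr{R}}=\{q'\mid q\,\mathscr{R}\,q'\wedge q'\,\mathscr{R}\,q\}$. $\mathscr{R}(X)=\{q'\mid\exists q\in X.\ q\,\mathscr{R}\,q'\}$, $\rightarrow^{-1}(Y)=\{q\mid\exists y\in Y.\ q\rightarrow y\}$; for sets, $X\rightarrow Y$ means some $x\in X,y\in Y$ have $x\rightarrow y$, and $X\,\mathscr{R}\,Y$ means $(X\times Y)\cap\mathscr{R}\neq\emptyset$. For a block $E$ of $\mathscr{P}$ and a block $B$ of $\mathscr{R}$, $\mathrm{RelCount}_{(\mathscr{P},\mathscr{R})}(E,B)=|\{E'\text{ block of }\mathscr{P}\mid E.\mathrm{rep}\rightarrow E'\wedge B\,\mathscr{R}\,E'\}|$. A splitter transition of type 1 is a pair ($E$ block of $\mathscr{P}$, $B$ block of $\mathscr{R}$) with $E\rightarrow B$ and $\mathrm{RelCount}_{(\mathscr{P},\mathscr{R})}(E,B)=0$. A splitter transition of type 2 is a pair ($E$, $B$) with $E.\mathrm{rep}\rightarrow B$, $\mathrm{RelCount}_{(\mathscr{P},\mathscr{R})}(E,B)=|\{[b]_{\mathscr{P}}\subseteq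 B\mid E.\mathrm{rep}\rightarrow b\}|$ and $E\not\subseteq\rightarrow^{-1}(B)$. $\mathscr{P}$ is $\mathscr{R}$-block-stable if for all $b,d,d'$ with $d\,\mathscr{P}\,d'$: $d\in\rightarrow^{-1}(\mathscr{R}(b))\iff d'\in\rightarrow^{-1}(\mathscr{R}(b))$. *)

From mathcomp Require Import all_boot.
Set Implicit Arguments.
Unset Strict Implicit.
Unset Printing Implicit Defensive.

Section Defs.
Variable Q : finType.

Definition is_preorder (R : rel Q) : Prop := reflexive R /\ transitive R.
Definition is_equivalence (P : rel Q) : Prop :=
  [/\ reflexive P, symmetric P & transitive P].
Definition subrel_of (P R : rel Q) : Prop := forall x y, P x y -> R x y.

Definition blk (R : rel Q) (q : Q) : {set Q} := [set q' | R q q' && R q' q].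
Definition is_block (R : rel Q) (X : {set Q}) : bool := [exists q, X == blk R q].
Definition img (R : rel Q) (X : {set Q}) : {set Q} :=
  [set q' | [exists q in X, R q q']].
Definition pre (tr : rel Q) (Y : {set Q}) : {set Q} :=
  [set q | [exists y in Y, tr q y]].
Definition trS (tr : rel Q) (X Y : {set Q}) : bool :=
  [exists x in X, exists y in Y, tr x y].
Definition relS (R : rel Q) (X Y : {set Q}) : bool :=
  [exists x in X, exists y in Y, R x y].

Definition RelCount (tr P R : rel Q) (rep : {set Q} -> Q) (E B : {set Q}) : nat :=
  #|[set E' : {set Q} | [&& is_block P E', trS tr [set rep E] E' & relS R B E']]|.

Definition SubCount (tr P : rel Q) (rep : {set Q} -> Q) (E B : {set Q}) : nat :=
  #|[set E' : {set Q} |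
      [exists b, [&& E' == blk P b, blk P b \subset B & tr (rep E) b]]]|.

Definition splitter1 (tr P R : rel Q) (rep : {set Q} -> Q) (E B : {set Q}) : Prop :=
  [/\ is_block P E, is_block R B, trS tr E B & RelCount tr P R rep E B = 0].

Definition splitter2 (tr P R : rel Q) (rep : {set Q} -> Q) (E B : {set Q}) : Prop :=
  [/\ is_block P E, is_block R B, [exists b in B, tr (rep E) b],
      RelCount tr P R rep E B = SubCount tr P rep E B
    & ~~ (E \subset pre tr B)].

Definition block_stable (tr P R : rel Q) : Prop :=
  forall b d d', P d d' ->
    (d \in pre tr (img R [set b])) <-> (d' \in pre tr (img R [set b])).

End Defs.

(* Let d -> q with b R q, and let E be the P-block of d.  Since E -> [q]_R is
   not a type-1 splitter, the representative E.rep has a successor above q.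
   Among the successors of E.rep lying above b pick an R-maximal one m.  By
   maximality, every successor of E.rep that is above m lies in [m]_R, so
   RelCount(E, [m]_R) counts exactly the P-blocks inside [m]_R reached from
   E.rep; as (E, [m]_R) is not a type-2 splitter, all of E moves into [m]_R,
   hence into R(b).  The proof never needs E.rep to lie in E. *)
From mathcomp Require Import all_boot.

Set Implicit Arguments.
Unset Strict Implicit.
Unset Printing Implicit Defensive.

Section Blocks.
Variables (Q : finType) (S : rel Q).

Lemma blk_refl : reflexive S -> forall c, c \in blk S c.
Proof. by move=> Sr c; rewrite inE Sr. Qed.

Lemma blk_is_block c : is_block S (blk S c).
Proof. by apply/existsP; exists c. Qed.

Lemma blk_eq : transitive S -> forall c y, y \in blk S c -> blk S c = blk S y.
Proof.
move=> St c y; rewrite inE => /andP [Scy Syc]; apply/setP => w; rewrite !inE.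
apply/andP/andP => [[Scw Swc]|[Syw Swy]]; split.
- exact: St Syc Scw.
- exact: St Swc Scy.
- exact: St Scy Syw.
- exact: St Swy Syc.
Qed.

Lemma in_img1 b q : (q \in img S [set b]) = S b q.
Proof.
rewrite inE; apply/existsP/idP => [[x /andP [/set1P -> //]]|Sbq].
by exists b; rewrite set11.
Qed.

Lemma preP (Y : {set Q}) q : reflect (exists2 y, y \in Y & S q y) (q \in pre S Y).
Proof.
rewrite inE; apply: (iffP existsP) => [[y /andP [Yy Sqy]]|[y Yy Sqy]].
  by exists y.
by exists y; rewrite Yy.
Qed.

Lemma trS1P x (Y : {set Q}) :
  reflect (exists2 y, y \in Y & S x y) (trS S [set x] Y).
Proof.
apply: (iffP existsP) => [[x' /andP [/set1P -> /existsP [y /andP [Yy Sxy]]]]|].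
  by exists y.
by case=> y Yy Sxy; exists x; rewrite set11; apply/existsP; exists y; rewrite Yy.
Qed.

Lemma relSP (X Y : {set Q}) :
  reflect (exists x y, [/\ x \in X, y \in Y & S x y]) (relS S X Y).
Proof.
apply: (iffP existsP) => [[x /andP [Xx /existsP [y /andP [Yy Sxy]]]]|].
  by exists x, y.
by case=> x [y [Xx Yy Sxy]]; exists x; rewrite Xx; apply/existsP; exists y; rewrite Yy.
Qed.

End Blocks.

Section Stability.
Variables (Q : finType) (tr P R : rel Q) (rep : {set Q} -> Q).
Hypotheses (R_refl : reflexive R) (R_trans : transitive R).
Hypotheses (P_refl : reflexive P) (P_trans : transitive P).
Hypothesis P_sub_R : subrel_of P R.
Hypothesis no_splitter1 : forall E B, ~ splitter1 tr P R rep E B.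
Hypothesis no_splitter2 : forall E B, ~ splitter2 tr P R rep E B.

Arguments R_trans {y x z}.

Lemma exists_maximal (A : pred Q) x :
  x \in A -> exists2 m, m \in A & forall y, y \in A -> R m y -> R y m.
Proof.
move=> Ax; case: (arg_minnP (fun m => #|[set z | R m z]|) Ax) => m Am m_min.
exists m => // y Ay Rmy; apply: contraT => nRym.
suff : #|[set z | R y z]| < #|[set z | R m z]| by rewrite ltnNge m_min.
apply: proper_card.
rewrite properE; apply/andP; split.
  by apply/subsetP => z; rewrite !inE; apply: R_trans.
by apply/subsetPn; exists m; rewrite !inE ?R_refl.
Qed.

Lemma relS_blk_R q c y : relS R (blk R q) (blk P c) -> y \in blk P c -> R q y.
Proof.
case/relSP=> x [z [Bx Ez Rxz]]; move: Bx Ez; rewrite !inE.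
case/andP=> Rqx _ /andP [_ Pzc] /andP [Pcy _].
exact: R_trans Rqx (R_trans Rxz (R_trans (P_sub_R Pzc) (P_sub_R Pcy))).
Qed.

Lemma RelCount_blk_neq0 E q :
  RelCount tr P R rep E (blk R q) != 0 -> exists2 y, tr (rep E) y & R q y.
Proof.
rewrite cards_eq0 => /set0Pn [E']; rewrite inE.
case/and3P=> /existsP [c /eqP ->] /trS1P [y Ey ry] Erel.
by exists y; last exact: relS_blk_R Erel Ey.
Qed.

Lemma RelCount_eq_SubCount E q :
  (forall y, tr (rep E) y -> R q y -> R y q) ->
  RelCount tr P R rep E (blk R q) = SubCount tr P rep E (blk R q).
Proof.
move=> q_max; apply: eq_card => E'; rewrite !inE; apply/idP/existsP.
- case/and3P=> /existsP [c /eqP ->] /trS1P [y Ey ry] Erel.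
  have Rqy := relS_blk_R Erel Ey.
  exists y; rewrite (blk_eq P_trans Ey) eqxx ry andbT.
  apply/subsetP => w; rewrite !inE => /andP [Pyw Pwy].
  by rewrite (R_trans Rqy (P_sub_R Pyw)) (R_trans (P_sub_R Pwy) (q_max y ry Rqy)).
- case=> c /and3P [/eqP -> Bsub rc]; rewrite blk_is_block /=.
  apply/andP; split; apply/trS1P || apply/relSP.
    by exists c; rewrite ?blk_refl.
  by exists c, c; rewrite (subsetP Bsub) ?blk_refl.
Qed.

Lemma succ_above_of_no_splitter1 d q :
  tr d q -> exists2 y, tr (rep (blk P d)) y & R q y.
Proof.
move=> dq; apply: RelCount_blk_neq0; apply/eqP => cnt0.
case: (no_splitter1 (E := blk P d) (B := blk R q)); split => //.
- exact: blk_is_block.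
- exact: blk_is_block.
- apply/existsP; exists d; rewrite blk_refl //=.
  by apply/existsP; exists q; rewrite blk_refl.
Qed.

Lemma sub_pre_blk_of_no_splitter2 E q :
  is_block P E -> tr (rep E) q -> (forall y, tr (rep E) y -> R q y -> R y q) ->
  E \subset pre tr (blk R q).
Proof.
move=> EP rq q_max; apply: contraT => notsub.
case: (no_splitter2 (E := E) (B := blk R q)); split => //.
- exact: blk_is_block.
- by apply/existsP; exists q; rewrite blk_refl.
- exact: RelCount_eq_SubCount.
Qed.

Lemma pre_img1_blk_closed b d d' :
  d \in pre tr (img R [set b]) -> d' \in blk P d -> d' \in pre tr (img R [set b]).
Proof.
case/preP=> q; rewrite in_img1 => Rbq dq Ed'.
set r := rep (blk P d).
have [y ry Rqy] := succ_above_of_no_splitter1 dq.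
have Ay : y \in [pred z | tr r z && R b z] by rewrite inE ry (R_trans Rbq Rqy).
have [m /andP [rm Rbm] m_max] := exists_maximal Ay.
have : d' \in pre tr (blk R m).
  apply: subsetP Ed'; apply: sub_pre_blk_of_no_splitter2 => //.
    exact: blk_is_block.
  by move=> z rz Rmz; apply: m_max (Rmz); rewrite inE rz (R_trans Rbm Rmz).
case/preP=> z; rewrite inE => /andP [Rmz _] d'z.
by apply/preP; exists z; rewrite ?in_img1 ?(R_trans Rbm Rmz).
Qed.

End Stability.

Theorem theorem2 (Q : finType) (tr R P : rel Q) (rep : {set Q} -> Q)
  (HR : is_preorder R) (HP : is_equivalence P) (HPR : subrel_of P R)
  (Hrep : forall E : {set Q}, is_block P E -> rep E \in E)
  (Hno1 : forall E B : {set Q}, ~ splitter1 tr P R rep E B)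
  (Hno2 : forall E B : {set Q}, ~ splitter2 tr P R rep E B) :
  block_stable tr P R.
Proof.
case: HR => Rr Rt; case: HP => Pr Ps Pt.
have closed := pre_img1_blk_closed Rr Rt Pr Pt HPR Hno1 Hno2.
move=> b d d' Pdd'; split=> /closed; apply; by rewrite inE Pdd' ?andbT Ps.
Qed.
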